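(* Let $X\overset{f}{\underset{g}{\rightrightarrows}}Y\xrightarrow{h}Z$ be a coequalizer diagram in $\mathbf{CLS}$ whose image in $\mathbf{Sets}$ is exact (i.e. $h$ is the coequalizer of $f,g$ as maps of sets and $(f,g)$ is the kernel pair of $h$ as maps of sets). If $f$ and $g$ are surjective closed maps, then $h$ is a surjective closed map; and if $f$ and $g$ are surjective open maps, then $h$ is a surjective open map.
   Context: A closure space is a pair $(A,\mathcal{C}_A)$ where $A$ is a set and $\mathcal{C}_A$ is a set of subsets of $A$ closed under arbitrary intersections (so $A\in\mathcal{C}_A$); elements of $\mathcal{C}_A$ are called closed, and their complements open. $\mathbf{CLS}$ has closure spaces as objects and, as morphisms $\alpha:A\to B$, maps with $\alpha^{-1}(B')\in\mathcal{C}_A$ for all $B'\in\mathcal{C}_B$. A morphism $p$ is closed if it maps closed sets to closed sets, and open if it maps open sets (complements of closed sets) to open sets. In a coequalizer $h$ in $\mathbf{CLS}$, $\mathcal{C}_Z=\{Z'\subseteq Z\mid h^{-1}(Z')\in\mathcal{C}_Y\}$. *)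

(* A closure system on A: a family C of subsets closed under arbitrary
   intersections (the empty intersection gives A itself). *)
Definition is_closure_space {A : Type} (C : (A -> Prop) -> Prop) : Prop :=
  forall F : (A -> Prop) -> Prop,
    (forall S, F S -> C S) -> C (fun a => forall S, F S -> S a).

Definition is_cls_morphism {A B : Type} (CA : (A -> Prop) -> Prop)
  (CB : (B -> Prop) -> Prop) (p : A -> B) : Prop :=
  forall S : B -> Prop, CB S -> CA (fun a => S (p a)).

Definition image {A B : Type} (p : A -> B) (S : A -> Prop) : B -> Prop :=
  fun b => exists a, S a /\ p a = b.

Definition compl {A : Type} (S : A -> Prop) : A -> Prop := fun a => ~ S a.

Definition closed_map {A B : Type} (CA : (A -> Prop) -> Prop)
  (CB : (B -> Prop) -> Prop) (p : A -> B) : Prop :=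
  forall S, CA S -> CB (image p S).

(* open map: images of open sets (complements of closed sets) are open,
   i.e. the complement of the image of the complement of a closed set is closed *)
Definition open_map {A B : Type} (CA : (A -> Prop) -> Prop)
  (CB : (B -> Prop) -> Prop) (p : A -> B) : Prop :=
  forall S, CA S -> CB (compl (image p (compl S))).

Definition surjective {A B : Type} (p : A -> B) : Prop :=
  forall b, exists a, p a = b.

Definition is_cls_coequalizer {X Y Z : Type}
  (CX : (X -> Prop) -> Prop) (CY : (Y -> Prop) -> Prop) (CZ : (Z -> Prop) -> Prop)
  (f g : X -> Y) (h : Y -> Z) : Prop :=
  is_closure_space CX /\ is_closure_space CY /\ is_closure_space CZ /\
  is_cls_morphism CX CY f /\ is_cls_morphism CX CY g /\ is_cls_morphism CY CZ h /\
  (forall x, h (f x) = h (g x)) /\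
  forall (W : Type) (CW : (W -> Prop) -> Prop), is_closure_space CW ->
    forall k : Y -> W, is_cls_morphism CY CW k -> (forall x, k (f x) = k (g x)) ->
      exists u : Z -> W, is_cls_morphism CZ CW u /\ (forall y, u (h y) = k y) /\
        forall u' : Z -> W, is_cls_morphism CZ CW u' -> (forall y, u' (h y) = k y) ->
          forall z, u' z = u z.

Definition is_set_coequalizer {X Y Z : Type} (f g : X -> Y) (h : Y -> Z) : Prop :=
  (forall x, h (f x) = h (g x)) /\
  forall (W : Type) (k : Y -> W), (forall x, k (f x) = k (g x)) ->
    exists u : Z -> W, (forall y, u (h y) = k y) /\
      forall u' : Z -> W, (forall y, u' (h y) = k y) -> forall z, u' z = u z.

Definition is_set_kernel_pair {X Y Z : Type} (f g : X -> Y) (h : Y -> Z) : Prop :=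
  (forall x, h (f x) = h (g x)) /\
  forall (V : Type) (a b : V -> Y), (forall v, h (a v) = h (b v)) ->
    exists u : V -> X, (forall v, f (u v) = a v /\ g (u v) = b v) /\
      forall u' : V -> X, (forall v, f (u' v) = a v /\ g (u' v) = b v) ->
        forall v, u' v = u v.

From Stdlib Require Import FunctionalExtensionality PropExtensionality.

(* Write  h : Y -> Z  for the coequalizer of  f, g : X -> Y.
   1. Since h is a surjective coequalizer in CLS, the closure system of Z is
      the final one: a subset S of Z is closed as soon as its preimage
      h^-1(S) is closed in Y.  (The final family { S | h^-1(S) closed } is
      itself a closure system, so the universal property yields a morphism
      Z -> Z that is the identity on the image of h, i.e. everywhere.)
   2. Surjectivity of h comes from the coequalizer property in Sets.
   3. Because (f, g) is the kernel pair of h, saturating a subset S of Y is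
      computed by a span:  h^-1(h(S)) = g(f^-1(S)).
   Hence for S closed, h^-1(h(S)) = g(f^-1(S)) is closed when g is a closed
   map, and h(S) is closed by 1.  Dually, taking complements in 3 gives
   h^-1(Z \ h(Y \ S)) = Y \ g(X \ f^-1(S)), which is closed when g is an
   open map, so h is open. *)

Lemma closed_ext {A : Type} (C : (A -> Prop) -> Prop) (P Q : A -> Prop) :
  C P -> (forall a, P a <-> Q a) -> C Q.
Proof.
  intros HP E.
  replace Q with P; [exact HP |].
  apply functional_extensionality; intro a.
  apply propositional_extensionality, E.
Qed.

Definition final_closure {A B : Type} (C : (A -> Prop) -> Prop) (p : A -> B)
  : (B -> Prop) -> Prop :=
  fun T => C (fun a => T (p a)).

Lemma final_closure_is_closure_space {A B : Type} (C : (A -> Prop) -> Prop)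
  (p : A -> B) :
  is_closure_space C -> is_closure_space (final_closure C p).
Proof.
  intros HC F HF. unfold final_closure.
  (* The preimage of an intersection is the intersection of the preimages. *)
  apply (closed_ext C
    (fun a => forall S, (exists T, F T /\ forall a, S a <-> T (p a)) -> S a)).
  - apply HC. intros S [T [FT ST]].
    apply (closed_ext C _ _ (HF T FT)). intro a. rewrite (ST a). tauto.
  - intro a. split.
    + intros H T FT. apply (H (fun a => T (p a))). exists T. split; [exact FT | tauto].
    + intros H S [T [FT ST]]. apply ST, H, FT.
Qed.

Lemma coequalizer_closed_of_preimage {X Y Z : Type}
  (CX : (X -> Prop) -> Prop) (CY : (Y -> Prop) -> Prop) (CZ : (Z -> Prop) -> Prop)
  (f g : X -> Y) (h : Y -> Z) :
  is_cls_coequalizer CX CY CZ f g h -> surjective h ->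
  forall S : Z -> Prop, CY (fun y => S (h y)) -> CZ S.
Proof.
  intros [_ [HY [_ [_ [_ [_ [Hfg Huniv]]]]]]] Hsurj S HS.
  (* h is a morphism into Z equipped with the final closure system ... *)
  destruct (Huniv Z (final_closure CY h) (final_closure_is_closure_space CY h HY)
              h (fun T HT => HT) Hfg) as [u [Hu [Huh _]]].
  (* ... and the induced u : (Z, CZ) -> (Z, final) is the identity. *)
  assert (Hid : forall z, u z = z).
  { intro z. destruct (Hsurj z) as [y <-]. apply Huh. }
  apply (closed_ext CZ _ _ (Hu S HS)). intro z. rewrite Hid. tauto.
Qed.

(* Step 2: a coequalizer of sets is surjective.  Compare the two maps
   Z -> Prop, "z lies in the image of h" and "True", which agree after h. *)
Lemma set_coequalizer_surjective {X Y Z : Type} (f g : X -> Y) (h : Y -> Z) :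
  is_set_coequalizer f g h -> surjective h.
Proof.
  intros [_ Huniv] z.
  destruct (Huniv Prop (fun _ => True) (fun _ => eq_refl)) as [u [_ Huniq]].
  assert (Himage : forall z, (exists y, h y = z) = u z).
  { apply Huniq. intro y. apply propositional_extensionality.
    split; [trivial | intros _; exists y; reflexivity]. }
  assert (Htrue : forall z, True = u z) by (apply Huniq; reflexivity).
  rewrite (Himage z), <- (Htrue z). exact I.
Qed.

(* Elements identified by h are joined by an element of the kernel pair
   (apply the pullback property to the one-point span). *)
Lemma kernel_pair_joins {X Y Z : Type} (f g : X -> Y) (h : Y -> Z) :
  is_set_kernel_pair f g h ->
  forall y' y, h y' = h y -> exists x, f x = y' /\ g x = y.
Proof.
  intros [_ Hpb] y' y E.
  destruct (Hpb unit (fun _ => y') (fun _ => y) (fun _ => E)) as [u [Hu _]].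
  exists (u tt). apply (Hu tt).
Qed.

Lemma kernel_pair_saturation {X Y Z : Type} (f g : X -> Y) (h : Y -> Z) :
  is_set_kernel_pair f g h ->
  forall (S : Y -> Prop) y,
    image h S (h y) <-> image g (fun x => S (f x)) y.
Proof.
  intros HK S y. split.
  - intros [y' [Sy' E]].
    destruct (kernel_pair_joins f g h HK y' y E) as [x [<- <-]].
    exists x. split; [exact Sy' | reflexivity].
  - intros [x [Sfx <-]]. exists (f x). split; [exact Sfx |].
    apply (proj1 HK).
Qed.

Lemma kernel_pair_cosaturation {X Y Z : Type} (f g : X -> Y) (h : Y -> Z) :
  is_set_kernel_pair f g h ->
  forall (S : Y -> Prop) y,
    compl (image h (compl S)) (h y) <->
    compl (image g (compl (fun x => S (f x)))) y.
Proof.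
  intros HK S y. unfold compl.
  rewrite (kernel_pair_saturation f g h HK (fun y => ~ S y) y).
  tauto.
Qed.

Theorem proposition6p4 (X Y Z : Type)
  (CX : (X -> Prop) -> Prop) (CY : (Y -> Prop) -> Prop) (CZ : (Z -> Prop) -> Prop)
  (f g : X -> Y) (h : Y -> Z) :
  is_cls_coequalizer CX CY CZ f g h ->
  is_set_coequalizer f g h ->
  is_set_kernel_pair f g h ->
  ((surjective f /\ closed_map CX CY f /\ surjective g /\ closed_map CX CY g) ->
     surjective h /\ closed_map CY CZ h) /\
  ((surjective f /\ open_map CX CY f /\ surjective g /\ open_map CX CY g) ->
     surjective h /\ open_map CY CZ h).
Proof.
  intros HC HS HK.
  pose proof (set_coequalizer_surjective f g h HS) as Hsurj.
  assert (Hf : is_cls_morphism CX CY f) by apply HC.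
  split.
  - intros [_ [_ [_ Hg]]]. split; [exact Hsurj |].
    intros S HSc. apply (coequalizer_closed_of_preimage CX CY CZ f g h HC Hsurj).
    apply (closed_ext CY _ _ (Hg _ (Hf S HSc))). intro y.
    symmetry. apply (kernel_pair_saturation f g h HK).
  - intros [_ [_ [_ Hg]]]. split; [exact Hsurj |].
    intros S HSc. apply (coequalizer_closed_of_preimage CX CY CZ f g h HC Hsurj).
    apply (closed_ext CY _ _ (Hg _ (Hf S HSc))). intro y.
    symmetry. apply (kernel_pair_cosaturation f g h HK).
Qed.
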